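(* Let $m,n\in\mathbb{N}$. For $1\le\ell\le m$ let $r_{\ell},s_{\ell}\in\mathbb{N}_{0}$, $q_{\ell}=e^{-2\pi\sigma_{\ell}}$, $p_{\ell}=e^{-2\pi\tau_{\ell}}$ with $\sigma_{\ell},\tau_{\ell}>0$, let $c_{1,\ell},\dots,c_{r_{\ell},\ell},d_{1,\ell},\dots,d_{s_{\ell},\ell}\in\mathbb{C}$ and a complex sequence $(B_{N,\ell})_{N\in\mathbb{Z}}$ be such that \[ \frac{(c_{1,\ell},\dots,c_{r_{\ell},\ell};q_{\ell},p_{\ell})_{N}}{(d_{1,\ell},\dots,d_{s_{\ell},\ell};q_{\ell},p_{\ell})_{N}}B_{N,\ell}\ge0\quad\text{for all }N\in\mathbb{Z}, \] and let $T_{\ell}\subset\mathbb{C}$ be an open set, symmetric under complex conjugation, such that the series ${}_{r_\ell}G_{s_\ell}$ below converges at $z\overline{w}$ for all $z,w\in T_\ell$. Let $w_{j,\ell}\in T_{\ell}$ for $1\le j\le n$, $1\le\ell\le m$. Then the $n\times n$ matrix \[ \left(\prod_{\ell=1}^{m}{}_{r_{\ell}}G_{s_{\ell}}\left(c_{1,\ell},\dots,c_{r_{\ell},\ell};\,d_{1,\ell},\dots,d_{s_{\ell},\ell};\,q_{\ell},p_{\ell};\,B_{\ell},\,w_{j,\ell}\overline{w_{k,\ell}}\right)\right)_{j,k=1}^{n} \] is positive semidefinite.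
   Context: For $0<p<1$: $(x;p)_\infty=\prod_{k\ge0}(1-xp^k)$, $\theta(x;p)=(x;p)_\infty(p/x;p)_\infty$. The elliptic shifted factorial is $(a;q,p)_N=\prod_{k=0}^{N-1}\theta(aq^{k};p)$ for $N\in\mathbb{N}$, $(a;q,p)_0=1$, $(a;q,p)_N=1/\prod_{k=0}^{-N-1}\theta(aq^{N+k};p)$ for $-N\in\mathbb{N}$, and $(a_1,\dots,a_r;q,p)_N=\prod_i(a_i;q,p)_N$. The bilateral modular series is \[ {}_{r}G_{s}(c_{1},\dots,c_{r};\,d_{1},\dots,d_{s};\,q,p;\,B,\,z)=\sum_{N=-\infty}^{\infty}\frac{(c_{1},\dots,c_{r};q,p)_{N}}{(d_{1},\dots,d_{s};q,p)_{N}}B_{N}z^{N} \] for a sequence $B=(B_N)_{N\in\mathbb{Z}}$. A complex matrix $M=(m_{j,k})$ is positive semidefinite if $\sum_{j,k}m_{j,k}u_j\overline{u_k}\ge0$ for all complex $u_j$. *)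

From Stdlib Require Import Reals ZArith.
From Coquelicot Require Export Coquelicot.
Open Scope R_scope.

Fixpoint Csum_upto (n : nat) (f : nat -> C) : C :=
  match n with O => RtoC 0 | S n' => Cplus (Csum_upto n' f) (f n') end.
Fixpoint Cprod_upto (n : nat) (f : nat -> C) : C :=
  match n with O => RtoC 1 | S n' => Cmult (Cprod_upto n' f) (f n') end.

(* limit of a complex sequence (meaningful when it converges) *)
Definition Clim (u : nat -> C) : C :=
  @lim (CompleteNormedModule.CompleteSpace _ C_CompleteNormedModule)
       (filtermap u eventually).

Definition qinf (x : C) (p : R) : C :=
  Clim (fun n => Cprod_upto n (fun k => Cminus (RtoC 1) (Cmult x (RtoC (p ^ k))))).

Definition theta (x : C) (p : R) : C :=
  Cmult (qinf x p) (qinf (Cdiv (RtoC p) x) p).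

Definition efac (a : C) (q p : R) (N : Z) : C :=
  match N with
  | Z0 => RtoC 1
  | Zpos _ => Cprod_upto (Z.to_nat N) (fun k => theta (Cmult a (RtoC (q ^ k))) p)
  | Zneg _ => Cinv (Cprod_upto (Z.to_nat (- N))
                 (fun k => theta (Cmult a (RtoC (powerRZ q (N + Z.of_nat k)))) p))
  end.

Definition efacs (r : nat) (a : nat -> C) (q p : R) (N : Z) : C :=
  Cprod_upto r (fun i => efac (a i) q p N).

Definition Cpowz (z : C) (N : Z) : C :=
  match N with
  | Z0 => RtoC 1
  | Zpos _ => Cprod_upto (Z.to_nat N) (fun _ => z)
  | Zneg _ => Cinv (Cprod_upto (Z.to_nat (- N)) (fun _ => z))
  end.

Definition Gterm (r s : nat) (c d : nat -> C) (q p : R) (B : Z -> C) (z : C) (N : Z) : C :=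
  Cmult (Cmult (Cdiv (efacs r c q p N) (efacs s d q p N)) (B N)) (Cpowz z N).

Definition Gconv (r s : nat) (c d : nat -> C) (q p : R) (B : Z -> C) (z : C) : Prop :=
  @ex_series C_AbsRing C_NormedModule (fun k => Gterm r s c d q p B z (Z.of_nat k)) /\
  @ex_series C_AbsRing C_NormedModule (fun k => Gterm r s c d q p B z (- Z.of_nat (S k))).

Definition Gval (r s : nat) (c d : nat -> C) (q p : R) (B : Z -> C) (z : C) : C :=
  Cplus (Clim (fun n => Csum_upto n (fun k => Gterm r s c d q p B z (Z.of_nat k))))
        (Clim (fun n => Csum_upto n (fun k => Gterm r s c d q p B z (- Z.of_nat (S k))))).

Definition Cnonneg (x : C) : Prop := Im x = 0 /\ 0 <= Re x.

(* the n x n complex matrix M (entries M j k, 0 <= j,k < n) is positive semidefinite *)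
Definition psd (n : nat) (M : nat -> nat -> C) : Prop :=
  forall u : nat -> C,
    Cnonneg (Csum_upto n (fun j => Csum_upto n (fun k =>
      Cmult (Cmult (M j k) (u j)) (Cconj (u k))))).

(* Since [(w_j conj w_k)^N = w_j^N conj(w_k^N)], every truncation of a single
   series is a nonnegative combination of rank-one matrices [v v^*], hence
   positive semidefinite.  The Hadamard product of a positive semidefinite
   matrix with [v v^*] is again positive semidefinite (test it against [u v]
   instead of [u]), so the entrywise product of the truncations over all [l]
   is positive semidefinite, and this property passes to entrywise limits. *)

From Stdlib Require Import Reals Lia Lra Psatz Classical.
From Coquelicot Require Import Coquelicot.
Open Scope R_scope.

Section FiniteSums.
Local Open Scope C_scope.

Lemma Csum_ext n f g :
  (forall i, (i < n)%nat -> f i = g i) -> Csum_upto n f = Csum_upto n g.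
Proof.
induction n as [|n IH]; intros H; simpl; [reflexivity|].
rewrite IH, H; [reflexivity | lia | intros; apply H; lia].
Qed.

Lemma Csum_plus n f g :
  Csum_upto n (fun i => f i + g i) = Csum_upto n f + Csum_upto n g.
Proof. induction n as [|n IH]; simpl; [ring|]. rewrite IH; ring. Qed.

Lemma Csum_mult_l n a f :
  a * Csum_upto n f = Csum_upto n (fun i => a * f i).
Proof. induction n as [|n IH]; simpl; [ring|]. rewrite <- IH; ring. Qed.

Lemma Csum_mult_r n a f :
  Csum_upto n f * a = Csum_upto n (fun i => f i * a).
Proof. induction n as [|n IH]; simpl; [ring|]. rewrite <- IH; ring. Qed.

Lemma Csum_swap n K f :
  Csum_upto n (fun i => Csum_upto K (f i)) =
  Csum_upto K (fun t => Csum_upto n (fun i => f i t)).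
Proof.
induction n as [|n IH]; simpl.
- induction K as [|K IHK]; simpl; [reflexivity|]. rewrite <- IHK; ring.
- rewrite IH, <- Csum_plus; reflexivity.
Qed.

Lemma Csum_conj n f :
  Cconj (Csum_upto n f) = Csum_upto n (fun i => Cconj (f i)).
Proof.
induction n as [|n IH]; simpl.
- apply injective_projections; simpl; ring.
- rewrite Cplus_conj, IH; reflexivity.
Qed.

Lemma Cprod_const_mult K a b :
  Cprod_upto K (fun _ => a * b) = Cprod_upto K (fun _ => a) * Cprod_upto K (fun _ => b).
Proof. induction K as [|K IH]; simpl; [ring|]. rewrite IH; ring. Qed.

Lemma Cprod_const_conj K a :
  Cprod_upto K (fun _ => Cconj a) = Cconj (Cprod_upto K (fun _ => a)).
Proof.
induction K as [|K IH]; simpl.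
- apply injective_projections; simpl; ring.
- rewrite IH, Cmult_conj; reflexivity.
Qed.

End FiniteSums.

Section NonnegativeReals.
Local Open Scope C_scope.

Lemma Cnonneg_plus a b : Cnonneg a -> Cnonneg b -> Cnonneg (a + b).
Proof. destruct a, b; intros [] []; split; simpl in *; lra. Qed.

Lemma Cnonneg_mult a b : Cnonneg a -> Cnonneg b -> Cnonneg (a * b).
Proof. destruct a, b; intros [] []; simpl in *; subst; split; simpl; [ring | nra]. Qed.

Lemma Cnonneg_sum n f :
  (forall i, (i < n)%nat -> Cnonneg (f i)) -> Cnonneg (Csum_upto n f).
Proof.
induction n as [|n IH]; intros H; simpl.
- split; simpl; lra.
- apply Cnonneg_plus; auto.
Qed.

Lemma Cnonneg_mul_conj z : Cnonneg (z * Cconj z).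
Proof. destruct z; split; simpl; [ring | nra]. Qed.

Lemma continuous_Re (z : C) : filterlim Re (@locally C_UniformSpace z) (locally (Re z)).
Proof. intros P [eps HP]; exists eps; intros y [Hre _]; apply HP, Hre. Qed.

Lemma continuous_Im (z : C) : filterlim Im (@locally C_UniformSpace z) (locally (Im z)).
Proof. intros P [eps HP]; exists eps; intros y [_ Him]; apply HP, Him. Qed.

Lemma closed_Cnonneg : @closed C_UniformSpace Cnonneg.
Proof.
apply closed_and.
- apply (closed_comp Im (fun x => x = 0%R)); [apply continuous_Im | apply closed_eq].
- apply (closed_comp Re (fun x => 0 <= x)); [apply continuous_Re | apply closed_ge].
Qed.

End NonnegativeReals.

Section Limits.
Local Open Scope C_scope.
Context {T : Type} (F : (T -> Prop) -> Prop) {FF : Filter F}.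

Lemma filterlim_Cplus f g a b :
  filterlim f F (locally a) -> filterlim g F (locally b) ->
  filterlim (fun x => f x + g x) F (@locally C_UniformSpace (a + b)).
Proof.
intros Hf Hg.
exact (filterlim_comp_2 f g Cplus Hf Hg (@filterlim_plus C_AbsRing C_NormedModule a b)).
Qed.

Lemma filterlim_Cmult f g a b :
  filterlim f F (locally a) -> filterlim g F (locally b) ->
  filterlim (fun x => f x * g x) F (@locally C_UniformSpace (a * b)).
Proof.
intros Hf Hg.
assert (Hf' : filterlim f F (@locally (AbsRing_UniformSpace C_AbsRing) a))
  by (intros P HP; apply Hf, locally_C, HP).
exact (filterlim_comp_2 f g (@scal C_AbsRing C_NormedModule) Hf' Hg
         (@filterlim_scal C_AbsRing C_NormedModule a b)).
Qed.

Lemma filterlim_Csum n (f : T -> nat -> C) g :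
  (forall i, (i < n)%nat -> filterlim (fun x => f x i) F (locally (g i))) ->
  filterlim (fun x => Csum_upto n (f x)) F (@locally C_UniformSpace (Csum_upto n g)).
Proof.
induction n as [|n IH]; intros H; simpl.
- apply filterlim_const.
- apply filterlim_Cplus; auto.
Qed.

Lemma filterlim_Cprod n (f : T -> nat -> C) g :
  (forall i, (i < n)%nat -> filterlim (fun x => f x i) F (locally (g i))) ->
  filterlim (fun x => Cprod_upto n (f x)) F (@locally C_UniformSpace (Cprod_upto n g)).
Proof.
induction n as [|n IH]; intros H; simpl.
- apply filterlim_const.
- apply filterlim_Cmult; auto.
Qed.

End Limits.

Lemma Clim_eq u l : filterlim u eventually (@locally C_UniformSpace l) -> Clim u = l.
Proof.
intros Hl; unfold Clim.
set (CS := CompleteNormedModule.CompleteSpace _ C_CompleteNormedModule).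
set (F := filtermap u eventually : (CS -> Prop) -> Prop).
assert (PF : ProperFilter F) by (apply filtermap_proper_filter, eventually_filter).
assert (Hc : cauchy F) by (intros eps; exists l; apply Hl, locally_ball).
apply (@is_filter_lim_unique C_AbsRing C_NormedModule F);
  [apply Proper_StrongProper, PF | | exact Hl].
intros P [eps HP]; eapply filter_imp; [exact HP|].
exact (@complete_cauchy CS F PF Hc eps).
Qed.

Lemma filterlim_Csum_series f :
  @ex_series C_AbsRing C_NormedModule f ->
  filterlim (fun M => Csum_upto M f) eventually
            (@locally C_UniformSpace (Clim (fun M => Csum_upto M f))).
Proof.
intros [l Hl].
assert (Hsum : forall M, @sum_n C_NormedModule f M = Csum_upto (S M) f).
{ induction M as [|M IH].
  - rewrite sum_O; simpl; apply injective_projections; simpl; ring.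
  - rewrite sum_Sn, IH; reflexivity. }
assert (Hs : filterlim (fun M => Csum_upto M f) eventually (@locally C_UniformSpace l)).
{ intros P HP; destruct (Hl P HP) as [N HN]; exists (S N); intros [|M] HM; [lia|].
  rewrite <- Hsum; apply HN; lia. }
rewrite (Clim_eq _ _ Hs); exact Hs.
Qed.

Section PositiveSemidefinite.
Local Open Scope C_scope.
Variable n : nat.

Definition Cqform (M : nat -> nat -> C) (u : nat -> C) : C :=
  Csum_upto n (fun j => Csum_upto n (fun k => M j k * u j * Cconj (u k))).

Lemma Cqform_ext M M' u :
  (forall j k, (j < n)%nat -> (k < n)%nat -> M j k = M' j k) ->
  Cqform M u = Cqform M' u.
Proof.
intros E; apply Csum_ext; intros j Hj; apply Csum_ext; intros k Hk.
rewrite E by assumption; reflexivity.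
Qed.

Lemma psd_ext M M' :
  (forall j k, (j < n)%nat -> (k < n)%nat -> M j k = M' j k) -> psd n M -> psd n M'.
Proof.
intros E HM u; change (Cnonneg (Cqform M' u)).
rewrite <- (Cqform_ext M M' u E); apply HM.
Qed.

Lemma psd_plus M M' : psd n M -> psd n M' -> psd n (fun j k => M j k + M' j k).
Proof.
intros HM HM' u.
assert (E : Cqform (fun j k => M j k + M' j k) u = Cqform M u + Cqform M' u).
{ unfold Cqform; rewrite <- Csum_plus; apply Csum_ext; intros j _.
  rewrite <- Csum_plus; apply Csum_ext; intros k _; ring. }
change (Cnonneg (Cqform (fun j k => M j k + M' j k) u)).
rewrite E; apply Cnonneg_plus; [apply HM | apply HM'].
Qed.

Lemma psd_sum K (A : nat -> nat -> nat -> C) :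
  (forall t, (t < K)%nat -> psd n (A t)) ->
  psd n (fun j k => Csum_upto K (fun t => A t j k)).
Proof.
intros HA u.
assert (E : Cqform (fun j k => Csum_upto K (fun t => A t j k)) u =
            Csum_upto K (fun t => Cqform (A t) u)).
{ unfold Cqform; symmetry; rewrite <- Csum_swap; apply Csum_ext; intros j _.
  rewrite <- Csum_swap; apply Csum_ext; intros k _.
  rewrite !Csum_mult_r; reflexivity. }
change (Cnonneg (Cqform (fun j k => Csum_upto K (fun t => A t j k)) u)).
rewrite E; apply Cnonneg_sum; intros t Ht; apply HA, Ht.
Qed.

Lemma psd_scale b M : Cnonneg b -> psd n M -> psd n (fun j k => b * M j k).
Proof.
intros Hb HM u.
assert (E : Cqform (fun j k => b * M j k) u = b * Cqform M u).
{ unfold Cqform; rewrite Csum_mult_l; apply Csum_ext; intros j _.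
  rewrite Csum_mult_l; apply Csum_ext; intros k _; ring. }
change (Cnonneg (Cqform (fun j k => b * M j k) u)).
rewrite E; apply Cnonneg_mult; [exact Hb | apply HM].
Qed.

Lemma psd_mul_rank_one M v :
  psd n M -> psd n (fun j k => M j k * (v j * Cconj (v k))).
Proof.
intros HM u.
assert (E : Cqform (fun j k => M j k * (v j * Cconj (v k))) u =
            Cqform M (fun j => u j * v j)).
{ apply Csum_ext; intros j _; apply Csum_ext; intros k _.
  rewrite Cmult_conj; ring. }
change (Cnonneg (Cqform (fun j k => M j k * (v j * Cconj (v k))) u)).
rewrite E; apply HM.
Qed.

Lemma psd_one : psd n (fun _ _ => RtoC 1).
Proof.
intros u.
assert (E : Cqform (fun _ _ => RtoC 1) u = Csum_upto n u * Cconj (Csum_upto n u)).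
{ unfold Cqform; rewrite Csum_mult_r; apply Csum_ext; intros j _.
  rewrite Csum_conj, Csum_mult_l; apply Csum_ext; intros k _; ring. }
change (Cnonneg (Cqform (fun _ _ => RtoC 1) u)).
rewrite E; apply Cnonneg_mul_conj.
Qed.

Lemma psd_mul_weighted_rank_one_sum M K b v :
  psd n M -> (forall t, (t < K)%nat -> Cnonneg (b t)) ->
  psd n (fun j k => M j k * Csum_upto K (fun t => b t * (v t j * Cconj (v t k)))).
Proof.
intros HM Hb.
apply (psd_ext (fun j k => Csum_upto K (fun t => b t * (M j k * (v t j * Cconj (v t k)))))).
- intros j k _ _; rewrite Csum_mult_l; apply Csum_ext; intros t _; ring.
- apply psd_sum; intros t Ht.
  apply psd_scale; [apply Hb, Ht | apply psd_mul_rank_one, HM].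
Qed.

Lemma psd_lim (A : nat -> nat -> nat -> C) M :
  (forall i, psd n (A i)) ->
  (forall j k, (j < n)%nat -> (k < n)%nat ->
     filterlim (fun i => A i j k) eventually (@locally C_UniformSpace (M j k))) ->
  psd n M.
Proof.
intros HA Hlim u; change (Cnonneg (Cqform M u)).
apply (@closed_filterlim _ C_UniformSpace eventually
         (Proper_StrongProper _ eventually_filter) (fun i => Cqform (A i) u) Cnonneg);
  [| intros i; apply HA | apply closed_Cnonneg].
apply filterlim_Csum; [apply eventually_filter | intros j Hj].
apply filterlim_Csum; [apply eventually_filter | intros k Hk].
apply filterlim_Cmult; [apply eventually_filter | | apply filterlim_const].
apply filterlim_Cmult; [apply eventually_filter | | apply filterlim_const].
apply Hlim; assumption.
Qed.

End PositiveSemidefinite.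

Section IntegerPowers.
Local Open Scope C_scope.

Lemma Cinv_0 : Cinv (RtoC 0) = RtoC 0.
Proof. apply injective_projections; simpl; unfold Rdiv; ring. Qed.

Lemma Cinv_mult_total x y : Cinv (x * y) = Cinv x * Cinv y.
Proof.
destruct (classic (x = RtoC 0)) as [->|Hx].
{ rewrite Cmult_0_l, Cinv_0, Cmult_0_l; reflexivity. }
destruct (classic (y = RtoC 0)) as [->|Hy].
{ rewrite Cmult_0_r, Cinv_0, Cmult_0_r; reflexivity. }
field; auto.
Qed.

Lemma Cinv_conj_total x : Cconj (Cinv x) = Cinv (Cconj x).
Proof.
destruct (classic (x = RtoC 0)) as [->|Hx]; [| apply Cinv_conj, Hx].
apply injective_projections; simpl; unfold Rdiv; ring.
Qed.

Lemma Cpowz_mult a b N : Cpowz (a * b) N = Cpowz a N * Cpowz b N.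
Proof.
destruct N; simpl; [ring | apply Cprod_const_mult |].
rewrite Cprod_const_mult, Cinv_mult_total; reflexivity.
Qed.

Lemma Cpowz_conj a N : Cpowz (Cconj a) N = Cconj (Cpowz a N).
Proof.
destruct N; simpl; [apply injective_projections; simpl; ring | apply Cprod_const_conj |].
rewrite Cprod_const_conj, Cinv_conj_total; reflexivity.
Qed.

End IntegerPowers.

Section BilateralSeries.
Local Open Scope C_scope.

Definition Gpartial (r s : nat) (c d : nat -> C) (q p : R) (B : Z -> C) (z : C) (M : nat) : C :=
  Csum_upto M (fun t => Gterm r s c d q p B z (Z.of_nat t)) +
  Csum_upto M (fun t => Gterm r s c d q p B z (- Z.of_nat (S t))).

Lemma filterlim_Gpartial r s c d q p B z :
  Gconv r s c d q p B z ->
  filterlim (Gpartial r s c d q p B z) eventually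
            (@locally C_UniformSpace (Gval r s c d q p B z)).
Proof.
intros [Hnat Hneg].
apply filterlim_Cplus; [apply eventually_filter | |]; apply filterlim_Csum_series; assumption.
Qed.

Lemma Gterm_mul_conj r s c d q p B z v N :
  Gterm r s c d q p B (z * Cconj v) N =
  (efacs r c q p N / efacs s d q p N * B N) * (Cpowz z N * Cconj (Cpowz v N)).
Proof. unfold Gterm; rewrite Cpowz_mult, Cpowz_conj; reflexivity. Qed.

Lemma psd_prod_Gpartial n L M (r s : nat -> nat) (c d : nat -> nat -> C) (q p : nat -> R)
      (B : nat -> Z -> C) (x : nat -> nat -> C) :
  (forall l N, (l < L)%nat ->
     Cnonneg (efacs (r l) (c l) (q l) (p l) N / efacs (s l) (d l) (q l) (p l) N * B l N)) ->
  psd n (fun j k => Cprod_upto L (fun l =>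
     Gpartial (r l) (s l) (c l) (d l) (q l) (p l) (B l) (x j l * Cconj (x k l)) M)).
Proof.
induction L as [|L IH]; intros Hcoef; [apply psd_one |].
set (a N := efacs (r L) (c L) (q L) (p L) N / efacs (s L) (d L) (q L) (p L) N * B L N).
set (P j k := Cprod_upto L (fun l =>
       Gpartial (r l) (s l) (c l) (d l) (q l) (p l) (B l) (x j l * Cconj (x k l)) M)).
assert (HP : psd n P) by (apply IH; intros; apply Hcoef; lia).
apply (psd_ext n (fun j k =>
   P j k * Csum_upto M (fun t => a (Z.of_nat t) *
     (Cpowz (x j L) (Z.of_nat t) * Cconj (Cpowz (x k L) (Z.of_nat t)))) +
   P j k * Csum_upto M (fun t => a (- Z.of_nat (S t))%Z *
     (Cpowz (x j L) (- Z.of_nat (S t)) * Cconj (Cpowz (x k L) (- Z.of_nat (S t))))))).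
- intros j k _ _; simpl; fold (P j k); unfold Gpartial.
  rewrite <- Cmult_plus_distr_l; f_equal; f_equal;
    apply Csum_ext; intros t _; rewrite Gterm_mul_conj; reflexivity.
- apply psd_plus; apply psd_mul_weighted_rank_one_sum; try exact HP;
    intros t _; apply Hcoef; lia.
Qed.

End BilateralSeries.

Theorem mainTheorem17
  (m n : nat) (Hm : (1 <= m)%nat) (Hn : (1 <= n)%nat)
  (r s : nat -> nat) (sigma tau : nat -> R)
  (c d : nat -> nat -> C) (B : nat -> Z -> C)
  (T : nat -> C -> Prop) (w : nat -> nat -> C)
  (Hst : forall l, (l < m)%nat -> 0 < sigma l /\ 0 < tau l)
  (Hpos : forall l N, (l < m)%nat ->
     Cnonneg (Cmult (Cdiv (efacs (r l) (c l) (exp (-2 * PI * sigma l)) (exp (-2 * PI * tau l)) N)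
                          (efacs (s l) (d l) (exp (-2 * PI * sigma l)) (exp (-2 * PI * tau l)) N))
                    (B l N)))
  (Hopen : forall l, (l < m)%nat -> @open C_UniformSpace (T l))
  (Hsym : forall l z, (l < m)%nat -> T l z -> T l (Cconj z))
  (Hconv : forall l z v, (l < m)%nat -> T l z -> T l v ->
     Gconv (r l) (s l) (c l) (d l) (exp (-2 * PI * sigma l)) (exp (-2 * PI * tau l))
           (B l) (Cmult z (Cconj v)))
  (Hw : forall j l, (j < n)%nat -> (l < m)%nat -> T l (w j l)) :
  psd n (fun j k => Cprod_upto m (fun l =>
     Gval (r l) (s l) (c l) (d l) (exp (-2 * PI * sigma l)) (exp (-2 * PI * tau l))
          (B l) (Cmult (w j l) (Cconj (w k l))))).
Proof.
set (q l := exp (-2 * PI * sigma l)).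
set (p l := exp (-2 * PI * tau l)).
apply (psd_lim n (fun M j k => Cprod_upto m (fun l =>
         Gpartial (r l) (s l) (c l) (d l) (q l) (p l) (B l) (Cmult (w j l) (Cconj (w k l))) M))).
- intros M; apply psd_prod_Gpartial, Hpos.
- intros j k Hj Hk.
  apply filterlim_Cprod; [apply eventually_filter | intros l Hl].
  apply filterlim_Gpartial, Hconv; auto.
Qed.
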